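(* For $i=1,2$ let $R_i$ be a unital ring whose additive group is finitely generated and torsion-free, and let $M_i\subseteq R_i^\times$ be a submonoid. Suppose there are $\mathbb Q$-algebra isomorphisms $\varphi_1\colon\mathbb QR_1\to\mathbb QR_2$ and $\varphi_2\colon\mathbb QR_2\to\mathbb QR_1$ with $\varphi_1(\langle M_1\rangle)\subseteq\langle M_2\rangle$ and $\varphi_2(\langle M_2\rangle)\subseteq\langle M_1\rangle$. If (S') every $\mathbb Q$-algebra automorphism $\psi$ of $\mathbb QR_1$ with $\psi(\langle M_1\rangle)\subseteq\langle M_1\rangle$ satisfies $\psi(\langle M_1\rangle)=\langle M_1\rangle$, then $\varphi_1(\langle M_1\rangle)=\langle M_2\rangle$ and $\varphi_2(\langle M_2\rangle)=\langle M_1\rangle$, so that the actions $\langle M_1\rangle\curvearrowright\mathbb QR_1$ and $\langle M_2\rangle\curvearrowright\mathbb QR_2$ by left multiplication are isomorphic. If (N) $M_i=\langle M_i\rangle\cap\mathcal O_i$ for $i=1,2$, and (S) every $\mathbb Q$-algebra automorphism $\psi$ of $\mathbb QR_1$ with $\psi(M_1)\subseteq M_1$ satisfies $\psi(M_1)=M_1$, then $\varphi_1(M_1)=M_2$ and $\varphi_2(M_2)=M_1$; consequently the actions $M_1\curvearrowright{\rm span}_{\mathbb Z}(M_1)$ and $M_2\curvearrowright{\rm span}_{\mathbb Z}(M_2)$ by left multiplication are isomorphic, and if each $\mathcal O_i$ is closed under addition and invariant under left multiplication by $M_i$, then $M_1\curvearrowright\mathcal O_1$ and $M_2\curvearrowright\mathcal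 O_2$ are isomorphic.
   Context: $\mathbb QR=\mathbb Q\otimes_{\mathbb Z}R$. $R^\times$ is the monoid of left regular elements of $R$; $\langle M\rangle$ is the subgroup of $(\mathbb QR)^*$ generated by $M$. $\mathcal O_i$ is the set of elements of $\mathbb QR_i$ integral over $\mathbb Z$. Two actions $\sigma\colon S\curvearrowright A$, $\tau\colon T\curvearrowright B$ of monoids on abelian groups are isomorphic if there are a monoid isomorphism $\mathfrak t\colon S\to T$ and a group isomorphism $\mathfrak b\colon A\to B$ with $\mathfrak b(\sigma_s(x))=\tau_{\mathfrak t(s)}(\mathfrak b(x))$. *)

From HB Require Import structures.
From mathcomp Require Import all_boot all_order all_algebra.
Set Implicit Arguments. Unset Strict Implicit. Unset Printing Implicit Defensive.
Import Order.TTheory GRing.Theory Num.Theory.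
Local Open Scope ring_scope.

Definition fg_torsion_free (R : nzRingType) : Prop :=
  (exists gens : seq R, forall r : R, exists c : 'I_(size gens) -> int,
      r = \sum_(i < size gens) gens`_i *~ c i)
  /\ (forall (r : R) (n : nat), r *+ n.+1 = 0 -> r = 0).

(* (A, iota) is a model of QR = Q (x)_Z R : iota is an injective ring
   morphism R -> A into a Q-algebra and every element of A has the form
   (1/n) iota(r); equivalently the Q-linear extension Q (x) R -> A,
   q (x) r |-> q *: iota r, is an isomorphism of Q-algebras. *)
Definition is_QR (R : nzRingType) (A : algType rat) (iota : {rmorphism R -> A})
  : Prop :=
  injective iota /\ (forall a : A, exists (n : nat) (r : R), a *+ n.+1 = iota r).

(* M is a submonoid of the monoid R^x of left regular elements of R. *)
Definition lreg_submonoid (R : nzRingType) (M : R -> Prop) : Prop :=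
  [/\ M 1, (forall x y, M x -> M y -> M (x * y)) & (forall x, M x -> GRing.lreg x)].

Definition img (A B : Type) (f : A -> B) (X : A -> Prop) : B -> Prop :=
  fun y => exists2 x, X x & f x = y.

Definition subset_of (A : Type) (X Y : A -> Prop) : Prop := forall x, X x -> Y x.
Definition set_equal (A : Type) (X Y : A -> Prop) : Prop := forall x, X x <-> Y x.

Inductive gen_group (A : nzRingType) (X : A -> Prop) : A -> Prop :=
  | gen_group_in x : X x -> gen_group X x
  | gen_group_1 : gen_group X 1
  | gen_group_mul x y : gen_group X x -> gen_group X y -> gen_group X (x * y)
  | gen_group_inv x y : gen_group X x -> x * y = 1 -> y * x = 1 -> gen_group X y.

Definition grp_of (R : nzRingType) (A : algType rat) (iota : {rmorphism R -> A})
  (M : R -> Prop) : A -> Prop := gen_group (img iota M).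

Definition integral_over_Z (A : nzRingType) (a : A) : Prop :=
  exists (n : nat) (c : 'I_n -> int),
    a ^+ n + \sum_(i < n) (a ^+ i) *~ c i = 0.

Definition Qalg_iso (A B : algType rat) (f : A -> B) : Prop :=
  [/\ {morph f : x y / x + y}, {morph f : x y / x * y}, f 1 = 1,
      (forall (q : rat) (x : A), f (q *: x) = q *: f x) & bijective f].

Definition zspan (A : nzRingType) (X : A -> Prop) : A -> Prop :=
  fun x => exists (n : nat) (m : 'I_n -> A) (c : 'I_n -> int),
    (forall i, X (m i)) /\ x = \sum_(i < n) m i *~ c i.

Definition lmul_action_iso (A1 A2 : nzRingType)
  (S1 X1 : A1 -> Prop) (S2 X2 : A2 -> Prop) : Prop :=
  exists (t : A1 -> A2) (b : A1 -> A2),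
    ((forall s, S1 s -> S2 (t s)) /\
     (forall s', S2 s' -> exists s, S1 s /\ t s = s') /\
     (forall s1 s2, S1 s1 -> S1 s2 -> t s1 = t s2 -> s1 = s2) /\
     (forall s1 s2, S1 s1 -> S1 s2 -> t (s1 * s2) = t s1 * t s2) /\
     t 1 = 1) /\
    ((forall x, X1 x -> X2 (b x)) /\
     (forall y, X2 y -> exists x, X1 x /\ b x = y) /\
     (forall x1 x2, X1 x1 -> X1 x2 -> b x1 = b x2 -> x1 = x2) /\
     (forall x1 x2, X1 x1 -> X1 x2 -> b (x1 + x2) = b x1 + b x2)) /\
    (forall s x, S1 s -> X1 x -> b (s * x) = t s * b x).

From HB Require Import structures.
From mathcomp Require Import all_boot all_order all_algebra.
Set Implicit Arguments. Unset Strict Implicit. Unset Printing Implicit Defensive.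
Import GRing.Theory.
Local Open Scope ring_scope.

(* Let X be <M1> or M1 and Y the corresponding <M2> or M2.  The composite
   phi2 \o phi1 is an automorphism of QR1 mapping X into itself (under (N)
   because Q-algebra isomorphisms preserve integrality over Z), so by (S'),
   resp. (S), it maps X onto X; as phi2 is injective, both inclusions
   phi1(X) <= Y and phi2(Y) <= X are then equalities.  Finally phi1 itself is
   both the monoid and the group isomorphism of the actions, since it maps X
   onto Y and QR1, span_Z(M1), O1 onto QR2, span_Z(M2), O2. *)

Section QalgIso.

Variables (A B : algType rat) (f : A -> B).
Hypothesis hf : Qalg_iso f.

Lemma Qalg_iso_zmod_morphism : zmod_morphism f.
Proof.
case: hf => fD _ _ _ _ x y.
have f0 : f 0 = 0 by apply: (addrI (f 0)); rewrite -fD !addr0.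
have fN z : f (- z) = - f z by apply: (addrI (f z)); rewrite -fD !subrr.
by rewrite fD fN.
Qed.

Lemma Qalg_iso_monoid_morphism : monoid_morphism f.
Proof. by case: hf. Qed.

HB.instance Definition _ := GRing.isZmodMorphism.Build A B f Qalg_iso_zmod_morphism.
HB.instance Definition _ := GRing.isMonoidMorphism.Build A B f Qalg_iso_monoid_morphism.

Lemma Qalg_iso_integral (a : A) : integral_over_Z a -> integral_over_Z (f a).
Proof.
case=> n [c Ea]; exists n, c.
move/(congr1 f): Ea; rewrite rmorphD rmorphXn rmorph_sum raddf0.
by under eq_bigr do rewrite rmorphMz rmorphXn.
Qed.

Lemma img_Qalg_iso_setT : set_equal (img f (fun _ => True)) (fun _ => True).
Proof. by case: hf => _ _ _ _ [g _ gK] y; split=> // _; exists (g y). Qed.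

Lemma img_Qalg_iso_zspan (S1 : A -> Prop) (S2 : B -> Prop) :
  set_equal (img f S1) S2 -> set_equal (img f (zspan S1)) (zspan S2).
Proof.
have [g fK gK] : bijective f by case: hf.
move=> eS y; split.
  case=> _ [n [m [c [S1m ->]]]] <-; exists n, (f \o m), c; split.
    by move=> i; apply/eS; exists (m i).
  by rewrite raddf_sum; apply: eq_bigr => i _; rewrite raddfMz.
case=> n [m [c [S2m ->]]]; exists (\sum_(i < n) g (m i) *~ c i).
  exists n, (g \o m), c; split=> // i /=.
  by case/eS: (S2m i) => x S1x <-; rewrite fK.
by rewrite raddf_sum; apply: eq_bigr => i _; rewrite raddfMz /= gK.
Qed.

Lemma Qalg_iso_lmul_action_iso (S1 X1 : A -> Prop) (S2 X2 : B -> Prop) :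
  set_equal (img f S1) S2 -> set_equal (img f X1) X2 ->
  lmul_action_iso S1 X1 S2 X2.
Proof.
have f_inj : injective f by case: hf => _ _ _ _ /bij_inj.
move=> eS eX; exists f, f; split; [|split].
- split; first by move=> s S1s; apply/eS; exists s.
  split; first by move=> s' /eS [s S1s <-]; exists s.
  split; first by move=> s1 s2 _ _ /f_inj.
  by split=> [s1 s2 _ _|]; rewrite ?rmorphM ?rmorph1.
- split; first by move=> x X1x; apply/eX; exists x.
  split; first by move=> x' /eX [x X1x <-]; exists x.
  split; first by move=> x1 x2 _ _ /f_inj.
  by move=> x1 x2 _ _; rewrite rmorphD.
- by move=> s x _ _; rewrite rmorphM.
Qed.

End QalgIso.

Lemma Qalg_iso_comp (A B C : algType rat) (f : A -> B) (g : B -> C) :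
  Qalg_iso f -> Qalg_iso g -> Qalg_iso (g \o f).
Proof.
case=> fD fM f1 fZ fb [gD gM g1 gZ gb]; split=> [x y|x y||q x|] /=.
- by rewrite fD gD.
- by rewrite fM gM.
- by rewrite f1 g1.
- by rewrite fZ gZ.
- exact: bij_comp.
Qed.

Lemma Qalg_iso_inv (A B : algType rat) (f : A -> B) :
  Qalg_iso f -> exists2 g : B -> A, Qalg_iso g & cancel g f.
Proof.
case=> fD fM f1 fZ [g fK gK]; exists g => //; split=> [x y|x y||q x|].
- by rewrite -{1}(gK x) -{1}(gK y) -fD fK.
- by rewrite -{1}(gK x) -{1}(gK y) -fM fK.
- by rewrite -f1 fK.
- by rewrite -{1}(gK x) -fZ fK.
- by exists f.
Qed.

Lemma img_Qalg_iso_integral (A B : algType rat) (f : A -> B) :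
  Qalg_iso f -> set_equal (img f (@integral_over_Z A)) (@integral_over_Z B).
Proof.
move=> hf y; split; first by case=> x Ix <-; apply: Qalg_iso_integral.
have [g hg gK] := Qalg_iso_inv hf.
by move=> Iy; exists (g y); rewrite ?gK //; apply: Qalg_iso_integral.
Qed.

Lemma img_comp_subset (T1 T2 T3 : Type) (f1 : T1 -> T2) (f2 : T2 -> T3) X Y Z :
  subset_of (img f1 X) Y -> subset_of (img f2 Y) Z ->
  subset_of (img (f2 \o f1) X) Z.
Proof.
by move=> sXY sYZ _ [x Xx <-]; apply: sYZ; exists (f1 x) => //; apply: sXY; exists x.
Qed.

Lemma img_eq_of_img_comp_eq (T1 T2 : Type) (f1 : T1 -> T2) (f2 : T2 -> T1) X Y :
  injective f2 -> subset_of (img f1 X) Y -> subset_of (img f2 Y) X ->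
  set_equal (img (f2 \o f1) X) X ->
  set_equal (img f1 X) Y /\ set_equal (img f2 Y) X.
Proof.
move=> f2_inj sXY sYX eX; split=> z; split.
- exact: sXY.
- move=> Yz; have [x Xx /= /f2_inj <-] : img (f2 \o f1) X (f2 z).
    by apply/eX/sYX; exists z.
  by exists x.
- exact: sYX.
- by case/eX=> x Xx /= <-; exists (f1 x) => //; apply: sXY; exists x.
Qed.

Lemma Qalg_iso_img_eq (A1 A2 : algType rat) (phi1 : A1 -> A2) (phi2 : A2 -> A1)
    (X : A1 -> Prop) (Y : A2 -> Prop) :
  Qalg_iso phi1 -> Qalg_iso phi2 ->
  subset_of (img phi1 X) Y -> subset_of (img phi2 Y) X ->
  (forall psi : A1 -> A1, Qalg_iso psi ->
     subset_of (img psi X) X -> set_equal (img psi X) X) ->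
  set_equal (img phi1 X) Y /\ set_equal (img phi2 Y) X.
Proof.
move=> hphi1 hphi2 sXY sYX hS.
have phi2_inj : injective phi2 by case: hphi2 => _ _ _ _ /bij_inj.
apply: img_eq_of_img_comp_eq => //.
exact: hS (Qalg_iso_comp hphi1 hphi2) (img_comp_subset sXY sYX).
Qed.

Lemma img_subset_integral_part (A B : algType rat) (f : A -> B)
    (X G : A -> Prop) (Y H : B -> Prop) :
  Qalg_iso f ->
  set_equal X (fun x => G x /\ integral_over_Z x) ->
  set_equal Y (fun y => H y /\ integral_over_Z y) ->
  subset_of (img f G) H -> subset_of (img f X) Y.
Proof.
move=> hf eX eY sGH _ [x /eX [Gx Ix] <-]; apply/eY; split.
  by apply: sGH; exists x.
exact: Qalg_iso_integral.
Qed.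

Theorem corollary5p2
  (R1 R2 : nzRingType) (A1 A2 : algType rat)
  (iota1 : {rmorphism R1 -> A1}) (iota2 : {rmorphism R2 -> A2})
  (M1 : R1 -> Prop) (M2 : R2 -> Prop)
  (phi1 : A1 -> A2) (phi2 : A2 -> A1)
  (hR1 : fg_torsion_free R1) (hR2 : fg_torsion_free R2)
  (hA1 : is_QR iota1) (hA2 : is_QR iota2)
  (hM1 : lreg_submonoid M1) (hM2 : lreg_submonoid M2)
  (hphi1 : Qalg_iso phi1) (hphi2 : Qalg_iso phi2)
  (hsub1 : subset_of (img phi1 (grp_of iota1 M1)) (grp_of iota2 M2))
  (hsub2 : subset_of (img phi2 (grp_of iota2 M2)) (grp_of iota1 M1)) :
  (* first assertion, under (S') *)
  ((forall psi : A1 -> A1, Qalg_iso psi ->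
       subset_of (img psi (grp_of iota1 M1)) (grp_of iota1 M1) ->
       set_equal (img psi (grp_of iota1 M1)) (grp_of iota1 M1)) ->
   [/\ set_equal (img phi1 (grp_of iota1 M1)) (grp_of iota2 M2),
       set_equal (img phi2 (grp_of iota2 M2)) (grp_of iota1 M1) &
       lmul_action_iso (grp_of iota1 M1) (fun _ => True)
                       (grp_of iota2 M2) (fun _ => True)])
  /\
  (* second assertion, under (N) and (S) *)
  (set_equal (img iota1 M1) (fun x => grp_of iota1 M1 x /\ integral_over_Z x) ->
   set_equal (img iota2 M2) (fun x => grp_of iota2 M2 x /\ integral_over_Z x) ->
   (forall psi : A1 -> A1, Qalg_iso psi ->
       subset_of (img psi (img iota1 M1)) (img iota1 M1) ->
       set_equal (img psi (img iota1 M1)) (img iota1 M1)) ->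
   [/\ set_equal (img phi1 (img iota1 M1)) (img iota2 M2),
       set_equal (img phi2 (img iota2 M2)) (img iota1 M1),
       lmul_action_iso (img iota1 M1) (zspan (img iota1 M1))
                       (img iota2 M2) (zspan (img iota2 M2)) &
       ((forall a b : A1, integral_over_Z a -> integral_over_Z b ->
            integral_over_Z (a + b)) ->
        (forall (m : R1) (a : A1), M1 m -> integral_over_Z a ->
            integral_over_Z (iota1 m * a)) ->
        (forall a b : A2, integral_over_Z a -> integral_over_Z b ->
            integral_over_Z (a + b)) ->
        (forall (m : R2) (a : A2), M2 m -> integral_over_Z a ->
            integral_over_Z (iota2 m * a)) ->
        lmul_action_iso (img iota1 M1) (@integral_over_Z A1)
                        (img iota2 M2) (@integral_over_Z A2))]).
Proof.
split.
  move=> hS'; have [e1 e2] := Qalg_iso_img_eq hphi1 hphi2 hsub1 hsub2 hS'.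
  by split=> //; apply: Qalg_iso_lmul_action_iso e1 (img_Qalg_iso_setT hphi1).
move=> hN1 hN2 hS.
have sM12 := img_subset_integral_part hphi1 hN1 hN2 hsub1.
have sM21 := img_subset_integral_part hphi2 hN2 hN1 hsub2.
have [e1 e2] := Qalg_iso_img_eq hphi1 hphi2 sM12 sM21 hS.
split=> //; first exact: Qalg_iso_lmul_action_iso e1 (img_Qalg_iso_zspan hphi1 e1).
by move=> _ _ _ _; apply: Qalg_iso_lmul_action_iso e1 (img_Qalg_iso_integral hphi1).
Qed.
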